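(* Let $T\in\mathcal{K}(V)$ with $\rho_S(T)\neq\emptyset$. For every intrinsic polynomial $P$, the operator $P(T)$ is closed.
   Context: Standing setting: either (a) $\mathbb{F}_0=\mathbb{F}=\mathbb{H}$, $V$ a two-sided quaternionic Banach space, $\mathcal{K}(V)$ the closed right linear operators on $V$ (defined on right subspaces); or (b) $\mathbb{F}=\mathbb{R}_n$ the real Clifford algebra generated by $e_1,\dots,e_n$, $\mathbb{F}_0=\mathbb{R}^{n+1}$ the paravectors $x_0+\sum x_ie_i$, $V=V_{\mathbb{R}}\otimes\mathbb{R}_n$ for a real Banach space $V_{\mathbb{R}}$, $\mathcal{K}(V)$ the operators of paravector type $T=T_0+\sum_{i=1}^nT_ie_i$ with closed $T_i$ on $V_{\mathbb{R}}$, defined on $\bigcap_i\operatorname{dom}(T_i)$. $\mathcal{B}(V)$ denotes the bounded everywhere defined such operators, $\mathcal{I}$ the identity; powers $T^k$ have the usual domains. For $s\in\mathbb{F}_0$, $\mathcal{Q}_s(T)=T^2-2\Re(s)T+|s|^2\mathcal{I}$ on $\operatorname{dom}(T^2)$, and $\rho_S(T)=\{s\in\mathbb{F}_0:\mathcal{Q}_s(T)^{-1}\in\mathcal{B}(V)\}$. An intrinsic polynomial is $P(s)=\sum_{k=0}^ma_ks^k$ with $a_k\in\mathbb{R}$, and $P(T)v:=\sum_{k=0}^ma_kT^kv$ for $v\in\operatorname{dom}(T^m)$. *)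

From mathcomp Require Import all_boot all_order all_algebra.
From mathcomp Require Import boolp classical_sets reals topology normedtype sequences.
Import GRing.Theory Num.Theory numFieldNormedType.Exports.

Set Implicit Arguments.
Unset Strict Implicit.
Unset Printing Implicit Defensive.

Local Open Scope classical_set_scope.
Local Open Scope ring_scope.

(* A partial operator is a pair (D, f) : domain D : set V, action f    *)
(* (f is only meaningful on D).                                        *)
Section PartialOps.
Variables (R : realType) (V : lmodType R).

Fixpoint powD (D : set V) (f : V -> V) (k : nat) : set V :=
  match k with
  | 0 => setT
  | k.+1 => [set v | D v /\ powD D f k (f v)]
  end.

Definition powf (f : V -> V) (k : nat) (v : V) : V := iter k f v.

(* Q_s(T) = T^2 - 2 Re(s) T + |s|^2 I on dom(T^2);
   it only depends on a = Re(s) and b = |s|^2. *)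
Definition QsD (D : set V) (f : V -> V) : set V := powD D f 2.
Definition Qsf (f : V -> V) (a b : R) (v : V) : V :=
  f (f v) - (2 * a) *: f v + b *: v.

Definition has_bounded_inverse (nrm : V -> R) (D : set V) (g : V -> V) :=
  exists (Rinv : V -> V) (C : R),
    (forall v, D (Rinv v) /\ g (Rinv v) = v) /\
    (forall v, D v -> Rinv (g v) = v) /\
    (forall v, nrm (Rinv v) <= C * nrm v).

(* intrinsic polynomial P(s) = sum_{k=0}^m a_k s^k with real a_k
   (m = degree of P) and P(T) v = sum_k a_k T^k v on dom(T^m). *)
Definition polyD (D : set V) (f : V -> V) (p : {poly R}) : set V :=
  powD D f (size p).-1.
Definition polyf (f : V -> V) (p : {poly R}) (v : V) : V :=
  \sum_(k < size p) p`_k *: powf f k v.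

Definition real_linear_op (D : set V) (f : V -> V) : Prop :=
  [/\ D 0,
      (forall x y, D x -> D y -> D (x + y)),
      (forall (c : R) x, D x -> D (c *: x)),
      (forall x y, D x -> D y -> f (x + y) = f x + f y) &
      (forall (c : R) x, D x -> f (c *: x) = c *: f x)].

(* graph closedness, stated sequentially w.r.t. a convergence notion cv *)
Definition seq_closed_op (cv : (nat -> V) -> V -> Prop)
    (D : set V) (f : V -> V) : Prop :=
  forall (u : nat -> V) (x y : V),
    (forall k, D (u k)) -> cv u x -> cv (f \o u) y -> D x /\ f x = y.

End PartialOps.

Definition ncv (R : realType) (V : normedModType R) (u : nat -> V) (x : V) :=
  u @ \oo --> x.

Record quat (R : Type) := Quat { q0 : R; q1 : R; q2 : R; q3 : R }.

Section Quaternions.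
Variable R : realType.

Definition qadd (a b : quat R) : quat R :=
  Quat (q0 a + q0 b) (q1 a + q1 b) (q2 a + q2 b) (q3 a + q3 b).

(* Hamilton product, i^2 = j^2 = k^2 = ijk = -1 *)
Definition qmul (a b : quat R) : quat R :=
  Quat (q0 a * q0 b - q1 a * q1 b - q2 a * q2 b - q3 a * q3 b)
       (q0 a * q1 b + q1 a * q0 b + q2 a * q3 b - q3 a * q2 b)
       (q0 a * q2 b - q1 a * q3 b + q2 a * q0 b + q3 a * q1 b)
       (q0 a * q3 b + q1 a * q2 b - q2 a * q1 b + q3 a * q0 b).

Definition qreal (r : R) : quat R := Quat r 0 0 0.

Definition qnorm2 (a : quat R) : R :=
  q0 a ^+ 2 + q1 a ^+ 2 + q2 a ^+ 2 + q3 a ^+ 2.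
Definition qnorm (a : quat R) : R := Num.sqrt (qnorm2 a).

(* V (a real Banach space) with left and right quaternionic scalar
   multiplications making it a two-sided quaternionic Banach space. *)
Definition two_sided_qBanach (V : completeNormedModType R)
    (lm : quat R -> V -> V) (rm : V -> quat R -> V) : Prop :=
  (forall a b v, lm (qadd a b) v = lm a v + lm b v) /\
  (forall a v w, lm a (v + w) = lm a v + lm a w) /\
  (forall a b v, lm (qmul a b) v = lm a (lm b v)) /\
  (forall (r : R) v, lm (qreal r) v = r *: v) /\
  (forall a b v, rm v (qadd a b) = rm v a + rm v b) /\
  (forall a v w, rm (v + w) a = rm v a + rm w a) /\
  (forall a b v, rm v (qmul a b) = rm (rm v a) b) /\
  (forall (r : R) v, rm v (qreal r) = r *: v) /\
  (forall a b v, rm (lm a v) b = lm a (rm v b)) /\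
  (forall a v, `|lm a v| = qnorm a * `|v|) /\
  (forall a v, `|rm v a| = qnorm a * `|v|).

Definition qK (V : completeNormedModType R) (rm : V -> quat R -> V)
    (D : set V) (f : V -> V) : Prop :=
  D 0 /\
  (forall x y, D x -> D y -> D (x + y)) /\
  (forall x a, D x -> D (rm x a)) /\
  (forall x y, D x -> D y -> f (x + y) = f x + f y) /\
  (forall x a, D x -> f (rm x a) = rm (f x) a) /\
  seq_closed_op (@ncv R V) D f.

Definition q_in_S_resolvent (V : completeNormedModType R)
    (D : set V) (f : V -> V) (s : quat R) : Prop :=
  has_bounded_inverse (fun v : V => `|v|) (QsD D f) (Qsf f (q0 s) (qnorm2 s)).

End Quaternions.

(* Setting (b): Clifford algebra R_n and V = V_R (x) R_n.             *)
(* Generators e_1..e_n are indexed by i : 'I_n, basis elements e_A by  *)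
(* A : {set 'I_n} (e_A = e_{a1}...e_{ak}, a1 < ... < ak).  An element  *)
(* v = sum_A v_A e_A of V is the function A |-> v_A.                   *)
Section Clifford.
Variables (R : realType) (n : nat) (VR : completeNormedModType R).

Local Notation cV := {ffun {set 'I_n} -> VR}.

Definition symd1 (A : {set 'I_n}) (i : 'I_n) : {set 'I_n} :=
  if i \in A then A :\ i else i |: A.

(* e_i e_A = csign i A * e_(symd1 A i)   (using e_i^2 = -1) *)
Definition csign (i : 'I_n) (A : {set 'I_n}) : R :=
  (-1) ^+ #|[set j in A | (j < i)%N]| * (if i \in A then -1 else 1).

(* paravector-type operator T = T_0 + sum_i T_i e_i, each T_j a closed
   real linear operator (DT j, fT j) on VR; index 0 of 'I_n.+1 is T_0,
   index (lift ord0 i) is the coefficient of the generator i : 'I_n. *)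
Definition paraD (DT : 'I_n.+1 -> set VR) : set cV :=
  [set v | forall A j, DT j (v A)].

(* T v = sum_A T_0 v_A e_A + sum_i sum_A T_i v_A e_i e_A *)
Definition paraF (fT : 'I_n.+1 -> VR -> VR) (v : cV) : cV :=
  [ffun B => fT ord0 (v B) +
    \sum_(i < n) csign i (symd1 B i) *: fT (lift ord0 i) (v (symd1 B i))].

(* a norm on V (all norms on V_R^(2^n) are equivalent) *)
Definition cnorm (v : cV) : R := \sum_(A : {set 'I_n}) `|v A|.

Definition ccv (u : nat -> cV) (x : cV) : Prop :=
  forall A, (fun k => u k A) @ \oo --> x A.

Definition cK (DT : 'I_n.+1 -> set VR) (fT : 'I_n.+1 -> VR -> VR) : Prop :=
  forall j, real_linear_op (DT j) (fT j) /\ seq_closed_op (@ncv R VR) (DT j) (fT j).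

(* s = s0 + sum_i s_i e_i in rho_S(T); Re(s) = s0, |s|^2 = s0^2 + sum s_i^2 *)
Definition c_in_S_resolvent (DT : 'I_n.+1 -> set VR) (fT : 'I_n.+1 -> VR -> VR)
    (s0 : R) (s : 'I_n -> R) : Prop :=
  @has_bounded_inverse R cV cnorm (QsD (paraD DT) (paraF fT))
    (Qsf (paraF fT) s0 (s0 ^+ 2 + \sum_(i < n) s i ^+ 2)).

End Clifford.

From mathcomp Require Import all_boot all_order all_algebra.
From mathcomp Require Import boolp classical_sets reals topology normedtype sequences.
From mathcomp Require Import zify ring lra.
Import Order.TTheory GRing.Theory Num.Theory numFieldNormedType.Exports.

Set Implicit Arguments.
Unset Strict Implicit.
Unset Printing Implicit Defensive.

Local Open Scope classical_set_scope.
Local Open Scope ring_scope.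

(* Let Q = Q_s(T) have the bounded inverse R. R maps V into dom(T^2), commutes
   with T, and T R is closed and everywhere defined, hence bounded by the closed
   graph theorem; so both R and T R are continuous, and T itself is closed.
   Let u_k -> x with P(T) u_k -> y. Dividing P by the quadratic polynomial
   of Q gives P = P1 Q + r with deg r <= 1, hence
     T R P(T) = (X P1)(T) + r_0 T R + r_1 T^2 R,   T^2 R = I + 2 Re(s) T R - |s|^2 R,
   so (X P1)(T) u_k converges as well. By induction on the degree every T^j u_k
   with j <= deg P converges (the top power via the leading coefficient), and
   the closedness of T, applied for j = 0, 1, ..., shows x in dom(T^(deg P))
   with T^j u_k -> T^j x. In the Clifford setting, convergence and the norm
   are componentwise, and each component of T R is a finite sum of closed
   everywhere defined operators on V_R. *)

Section PartialOperator.
Variables (R : realType) (V : lmodType R) (D : set V) (f : V -> V).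

Definition iter_dom k v := forall i, (i < k)%N -> D (iter i f v).

Lemma powD_iter_dom k v : powD D f k v <-> iter_dom k v.
Proof.
elim: k v => [|k IH] v /=; first by split => // _ i.
split.
  by move=> [Dv /IH Hv] [|i] //= ?; rewrite -iterS iterSr; apply: Hv.
move=> Hv; split; first exact: (Hv 0%N).
by apply/IH => i ?; rewrite -iterSr; apply: (Hv i.+1).
Qed.

Lemma iter_dom_le k l v : (l <= k)%N -> iter_dom k v -> iter_dom l v.
Proof. by move=> lk Hv i il; apply: Hv; apply: leq_trans lk. Qed.

Lemma iter_domS k v : iter_dom k.+1 v <-> D v /\ iter_dom k (f v).
Proof. by rewrite -!powD_iter_dom. Qed.

Lemma iter_dom_rcons k v : iter_dom k v -> D (iter k f v) -> iter_dom k.+1 v.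
Proof. by move=> Hv Dk i; rewrite ltnS leq_eqVlt => /orP[/eqP->|] //; apply: Hv. Qed.

Hypothesis lin : real_linear_op D f.

Lemma rlin_dom0 : D 0.
Proof. by case: lin. Qed.

Lemma rlin_domD x y : D x -> D y -> D (x + y).
Proof. by case: lin => _ H _ _ _; apply: H. Qed.

Lemma rlin_domZ (c : R) x : D x -> D (c *: x).
Proof. by case: lin => _ _ H _ _; apply: H. Qed.

Lemma rlin_fD x y : D x -> D y -> f (x + y) = f x + f y.
Proof. by case: lin => _ _ _ H _; apply: H. Qed.

Lemma rlin_fZ (c : R) x : D x -> f (c *: x) = c *: f x.
Proof. by case: lin => _ _ _ _ H; apply: H. Qed.

Lemma rlin_domB x y : D x -> D y -> D (x - y).
Proof. by move=> Dx Dy; rewrite -scaleN1r; apply/rlin_domD/rlin_domZ. Qed.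

Lemma rlin_fB x y : D x -> D y -> f (x - y) = f x - f y.
Proof.
move=> Dx Dy; have DNy : D (-1 *: y) by exact: rlin_domZ.
by rewrite -scaleN1r rlin_fD // rlin_fZ // scaleN1r.
Qed.

Lemma rlin_f0 : f 0 = 0.
Proof. by rewrite -(scale0r 0) rlin_fZ ?scale0r //; apply: rlin_dom0. Qed.

Lemma rlin_sum (I : Type) (r : seq I) (F : I -> V) :
  (forall i, D (F i)) ->
  D (\sum_(i <- r) F i) /\ f (\sum_(i <- r) F i) = \sum_(i <- r) f (F i).
Proof.
move=> DF; elim: r => [|i r [Dr fr]].
  by rewrite !big_nil rlin_f0; split => //; exact: rlin_dom0.
by rewrite !big_cons rlin_fD // fr; split => //; apply: rlin_domD.
Qed.

Lemma iter_domD k x y : iter_dom k x -> iter_dom k y -> iter_dom k (x + y).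
Proof.
elim: k x y => [|k IH] x y Hx Hy; first by move=> i.
move/iter_domS: Hx => [Dx Hx]; move/iter_domS: Hy => [Dy Hy].
by apply/iter_domS; rewrite rlin_fD //; split; [apply: rlin_domD|apply: IH].
Qed.

Lemma iter_domZ k c x : iter_dom k x -> iter_dom k (c *: x).
Proof.
elim: k x => [|k IH] x Hx; first by move=> i.
move/iter_domS: Hx => [Dx Hx].
by apply/iter_domS; rewrite rlin_fZ //; split; [apply: rlin_domZ|apply: IH].
Qed.

Lemma iter_dom_Qsf k a b u : iter_dom k.+2 u -> iter_dom k (Qsf f a b u).
Proof.
move=> Hu; have /iter_domS[_ Hfu] := Hu; have /iter_domS[_ Hffu] := Hfu.
apply: iter_domD; last exact/iter_domZ/(iter_dom_le (leqW (leqnSn k)) Hu).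
rewrite -scaleN1r; apply: iter_domD => //.
by do 2!apply: iter_domZ; apply: (iter_dom_le _ Hfu).
Qed.

Lemma polyfE N (p : {poly R}) v : (size p <= N)%N ->
  polyf f p v = \sum_(k < N) p`_k *: iter k f v.
Proof.
move=> sN; rewrite /polyf /powf (big_ord_widen N (fun k => p`_k *: iter k f v) sN).
rewrite big_mkcond /=; apply: eq_bigr => i _.
by case: ltnP => // ?; rewrite nth_default // scale0r.
Qed.

Lemma polyf0 v : polyf f 0 v = 0.
Proof. by rewrite /polyf size_poly0 big_ord0. Qed.

Lemma polyfD (p q : {poly R}) v : polyf f (p + q) v = polyf f p v + polyf f q v.
Proof.
pose N := maxn (size p) (size q).
rewrite (@polyfE N) ?size_polyD // (@polyfE N p) ?leq_maxl // (@polyfE N q) ?leq_maxr //.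
by rewrite -big_split; apply: eq_bigr => i _; rewrite coefD scalerDl.
Qed.

Lemma polyfZ c (q : {poly R}) v : polyf f (c *: q) v = c *: polyf f q v.
Proof.
rewrite (@polyfE (size q)) ?size_scale_leq // /polyf scaler_sumr.
by apply: eq_bigr => i _; rewrite coefZ scalerA.
Qed.

Lemma polyfC c v : polyf f c%:P v = c *: v.
Proof. by rewrite (@polyfE 1) ?size_polyC ?leq_b1 // big_ord1 coefC. Qed.

Lemma polyf_size2 (r : {poly R}) v : (size r <= 2)%N ->
  polyf f r v = r`_0 *: v + r`_1 *: f v.
Proof. by move=> sr; rewrite (polyfE _ sr) !big_ord_recr big_ord0 /= add0r. Qed.

Lemma polyfMX (p : {poly R}) v : polyf f (p * 'X) v = polyf f p (f v).
Proof.
have [->|p0] := eqVneq p 0; first by rewrite mul0r !polyf0.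
rewrite /polyf size_mulX // big_ord_recl coefMX eqxx scale0r add0r /powf.
by apply: eq_bigr => i _; rewrite coefMX /= -iterS iterSr.
Qed.

Lemma polyf_sum_dom (q : {poly R}) u : iter_dom (size q) u ->
  D (polyf f q u) /\ f (polyf f q u) = \sum_(k < size q) q`_k *: f (iter k f u).
Proof.
move=> Hu; have [] // := @rlin_sum _ (index_enum 'I_(size q))
  (fun i => q`_i *: iter i f u) (fun i => rlin_domZ _ (Hu i (ltn_ord i))).
by move=> Dq ->; split => //; apply: eq_bigr => i _; rewrite rlin_fZ //; exact: Hu.
Qed.

Lemma polyf_dom (q : {poly R}) u : iter_dom (size q) u -> D (polyf f q u).
Proof. by case/polyf_sum_dom. Qed.

Lemma f_polyf (q : {poly R}) u : iter_dom (size q) u ->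
  f (polyf f q u) = polyf f ('X * q) u.
Proof.
case/polyf_sum_dom => _ ->; rewrite -commr_polyX polyfMX.
by apply: eq_bigr => i _; rewrite -iterS iterSr.
Qed.

Lemma polyfM (p q : {poly R}) u : iter_dom (size p + size q).-2 u ->
  polyf f (p * q) u = polyf f p (polyf f q u).
Proof.
elim/poly_ind: p q u => [|p c IH] q u Hu; first by rewrite mul0r !polyf0.
have [->|p0] := eqVneq p 0.
  by rewrite mul0r add0r mul_polyC polyfZ polyfC.
have sp0 : (0 < size p)%N by rewrite size_poly_gt0.
move: Hu; rewrite size_MXaddC (negbTE p0) /= => Hu.
have sXq : (size ('X * q)%R <= (size q).+1)%N.
  by have [->|q0] := eqVneq q 0; rewrite ?mulr0 ?size_poly0 // -commr_polyX size_mulX.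
have le_pred2 m n k : (0 < m)%N -> (k <= n.+1)%N -> ((m + k).-2 <= (m + n).-1)%N.
  by rewrite -!subn1; lia.
have le_pred1 m n : (0 < m)%N -> (n <= (m + n).-1)%N by rewrite -!subn1; lia.
rewrite mulrDl -mulrA mul_polyC polyfD polyfZ IH; last first.
  exact: (iter_dom_le (le_pred2 _ _ _ sp0 sXq) Hu).
rewrite -(f_polyf (iter_dom_le (le_pred1 _ _ sp0) Hu)).
by rewrite polyfD polyfMX polyfC.
Qed.


Section Resolvent.
Variables (Rq : V -> V) (a b : R).
Hypothesis Rq_dom : forall v, QsD D f (Rq v).
Hypothesis QsfK : forall v, Qsf f a b (Rq v) = v.
Hypothesis RqK : forall v, QsD D f v -> Rq (Qsf f a b v) = v.

Lemma Rq_iter_dom v : iter_dom 2 (Rq v).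
Proof. exact/powD_iter_dom/Rq_dom. Qed.

Lemma Rq_in_dom v : D (Rq v).
Proof. exact: Rq_iter_dom 0%N isT. Qed.

Lemma fRq_in_dom v : D (f (Rq v)).
Proof. exact: Rq_iter_dom 1%N isT. Qed.

Lemma ffRq v : f (f (Rq v)) = v + (2 * a) *: f (Rq v) - b *: Rq v.
Proof. by rewrite -{2}(QsfK v) /Qsf [_ - _ + _ + _]addrAC subrK addrK. Qed.

Lemma Rq_Qsf v : iter_dom 2 v -> Rq (Qsf f a b v) = v.
Proof. by move=> Hv; apply/RqK/powD_iter_dom. Qed.

Lemma QsfD x y : iter_dom 2 x -> iter_dom 2 y ->
  Qsf f a b (x + y) = Qsf f a b x + Qsf f a b y.
Proof.
move=> Hx Hy; have Dx := Hx 0%N isT; have Dfx := Hx 1%N isT.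
have Dy := Hy 0%N isT; have Dfy := Hy 1%N isT.
rewrite /Qsf !rlin_fD // !scalerDr opprD.
by rewrite [_ + _ + (- _ - _)]addrACA [LHS]addrACA.
Qed.

Lemma QsfZ c x : iter_dom 2 x -> Qsf f a b (c *: x) = c *: Qsf f a b x.
Proof.
move=> Hx; have Dx := Hx 0%N isT; have Dfx := Hx 1%N isT.
by rewrite /Qsf !rlin_fZ // !scalerDr scalerN !scalerA [c * (2 * a)]mulrC [c * b]mulrC.
Qed.

Lemma RqD x y : Rq (x + y) = Rq x + Rq y.
Proof.
have <- : Qsf f a b (Rq x + Rq y) = x + y by rewrite QsfD ?QsfK //; apply: Rq_iter_dom.
by rewrite Rq_Qsf //; apply: iter_domD; apply: Rq_iter_dom.
Qed.

Lemma RqZ c x : Rq (c *: x) = c *: Rq x.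
Proof.
have <- : Qsf f a b (c *: Rq x) = c *: x by rewrite QsfZ ?QsfK //; apply: Rq_iter_dom.
by rewrite Rq_Qsf //; apply: iter_domZ; apply: Rq_iter_dom.
Qed.

Lemma Rq0 : Rq 0 = 0.
Proof. by have := RqZ 0 0; rewrite !scale0r. Qed.

Lemma RqB x y : Rq (x - y) = Rq x - Rq y.
Proof. by rewrite RqD -[- y]scaleN1r RqZ scaleN1r. Qed.

Lemma Rq_f v : D v -> Rq (f v) = f (Rq v).
Proof.
move=> Dv; have DRv := Rq_in_dom v; have DfRv := fRq_in_dom v.
have DffRv : D (f (f (Rq v))).
  rewrite ffRq; apply: rlin_domB; last exact: rlin_domZ.
  by apply: rlin_domD => //; apply: rlin_domZ.
have <- : Qsf f a b (f (Rq v)) = f v.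
  rewrite -{2}(QsfK v) /Qsf rlin_fD ?rlin_fB ?rlin_fZ //;
    by [apply: rlin_domZ | apply: rlin_domB => //; apply: rlin_domZ].
by rewrite Rq_Qsf // => -[|[|i]].
Qed.

Lemma Rq_iter k v : iter_dom k v -> Rq (iter k f v) = iter k f (Rq v).
Proof.
elim: k => [|k IH] Hv //=.
by rewrite Rq_f ?IH //; [apply: (iter_dom_le _ Hv) | apply: Hv].
Qed.

Lemma Rq_polyf (p : {poly R}) v : iter_dom (size p).-1 v ->
  Rq (polyf f p v) = polyf f p (Rq v).
Proof.
move=> Hv; rewrite /polyf (big_morph Rq RqD Rq0); apply: eq_bigr => -[i /= ip] _.
rewrite RqZ /powf Rq_iter //; apply: (iter_dom_le _ Hv).
by rewrite -ltnS prednK // (leq_ltn_trans _ ip).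
Qed.

Section SequentialClosedness.
Variable cv : (nat -> V) -> V -> Prop.
Hypothesis cvD : forall u w x y, cv u x -> cv w y -> cv (fun k => u k + w k) (x + y).
Hypothesis cvZ : forall u x (c : R), cv u x -> cv (fun k => c *: u k) (c *: x).
Hypothesis cv_unique : forall u x y, cv u x -> cv u y -> x = y.
Hypothesis cv_cst0 : cv (fun _ => 0) 0.
Hypothesis Rq_cv : forall u x, cv u x -> cv (fun k => Rq (u k)) (Rq x).
Hypothesis fRq_cv : forall u x, cv u x -> cv (fun k => f (Rq (u k))) (f (Rq x)).

Definition convergent (u : nat -> V) := exists x, cv u x.

Lemma cvB u w x y : cv u x -> cv w y -> cv (fun k => u k - w k) (x - y).
Proof.
move=> cu cw; have := cvD cu (cvZ (-1) cw).
by rewrite scaleN1r; under eq_fun do rewrite scaleN1r.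
Qed.

Lemma cv_sum N (c : 'I_N -> R) (w : 'I_N -> nat -> V) (l : 'I_N -> V) :
  (forall i, cv (w i) (l i)) ->
  cv (fun k => \sum_(i < N) c i *: w i k) (\sum_(i < N) c i *: l i).
Proof.
elim: N c w l => [|N IH] c w l cw.
  by rewrite big_ord0; under eq_fun do rewrite big_ord0.
rewrite big_ord_recr /=; under eq_fun do rewrite big_ord_recr /=.
by apply: cvD; [apply: IH => i; apply: cw | apply: cvZ].
Qed.

(* x = Q(T) R x and T R x = R y, so x and T x are given by T R y, R y and R x. *)
Lemma cv_closed : seq_closed_op cv D f.
Proof.
move=> u x y Du cu cfu.
have fRx : f (Rq x) = Rq y.
  apply: cv_unique (fRq_cv cu) _.
  by under eq_fun do rewrite -Rq_f //; apply: Rq_cv.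
have Ex : x = f (Rq y) - (2 * a) *: Rq y + b *: Rq x by rewrite -fRx -{1}(QsfK x).
have DRy := Rq_in_dom y; have DfRy := fRq_in_dom y; have DRx := Rq_in_dom x.
have DaRy : D ((2 * a) *: Rq y) by apply: rlin_domZ.
have DbRx : D (b *: Rq x) by apply: rlin_domZ.
have D2 : D (f (Rq y) - (2 * a) *: Rq y) by apply: rlin_domB.
split; first by rewrite Ex; apply: rlin_domD.
rewrite Ex rlin_fD ?rlin_fB ?rlin_fZ //.
by rewrite ffRq fRx [y + _ - _ - _]addrAC addrK subrK.
Qed.

(* X^2 - 2a X + b, coefficients listed from the constant term up *)
Definition qs_poly : {poly R} := Poly [:: b; -(2 * a); 1].

Lemma size_qs_poly : size qs_poly = 3.
Proof. by rewrite /qs_poly (@PolyK _ 0) //= oner_neq0. Qed.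

Lemma qs_poly_neq0 : qs_poly != 0.
Proof. by rewrite -size_poly_eq0 size_qs_poly. Qed.

Lemma polyf_qs_poly v : polyf f qs_poly v = Qsf f a b v.
Proof.
rewrite /polyf size_qs_poly !big_ord_recr big_ord0 /= !coef_Poly /= /powf /= add0r scale1r.
by rewrite /Qsf scaleNr addrAC [RHS]addrC addrA.
Qed.

(* From P = P1 Q + r with deg r <= 1 and R Q(T) = I on dom(T^2). *)
Lemma fRq_polyf (P : {poly R}) m v :
  size P = m.+1 -> (2 <= m)%N -> iter_dom m v ->
  f (Rq (polyf f P v)) = polyf f ('X * (P %/ qs_poly)) v
    + (P %% qs_poly)`_0 *: f (Rq v) + (P %% qs_poly)`_1 *: f (f (Rq v)).
Proof.
move=> sP m2 Hv; set P1 := P %/ qs_poly; set r := P %% qs_poly.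
have sP1 : size P1 = m.-1.
  by rewrite size_divp ?qs_poly_neq0 // size_qs_poly sP; rewrite -!subn1; lia.
have sr : (size r <= 2)%N by have := ltn_modp P qs_poly; rewrite qs_poly_neq0 size_qs_poly.
have Dv : D v by apply: (Hv 0%N); lia.
have Hv2 : iter_dom 2 v by apply: (iter_dom_le _ Hv).
have HP1 : iter_dom (size P1) v.
  by rewrite sP1; apply: (iter_dom_le _ Hv); rewrite -!subn1; lia.
have HQ : iter_dom (size P1).-1 (Qsf f a b v).
  by rewrite sP1; apply: iter_dom_Qsf; apply: (iter_dom_le _ Hv); rewrite -!subn1; lia.
have -> : Rq (polyf f P v) = polyf f P1 v + (r`_0 *: Rq v + r`_1 *: f (Rq v)).
  rewrite {1}(divp_eq P qs_poly) -/P1 -/r polyfD (polyf_size2 _ sr) polyfM; last first.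
    by rewrite sP1 size_qs_poly; apply: (iter_dom_le _ Hv); rewrite -!subn1; lia.
  by rewrite polyf_qs_poly !RqD Rq_polyf // Rq_Qsf // !RqZ Rq_f.
have DRv := Rq_in_dom v; have DfRv := fRq_in_dom v.
rewrite rlin_fD ?rlin_fD ?rlin_fZ ?f_polyf ?addrA //; try exact: rlin_domZ.
- exact: polyf_dom.
- by apply: rlin_domD; apply: rlin_domZ.
Qed.

Lemma convergent_polyf_Xdivp (P : {poly R}) m u : size P = m.+1 -> (2 <= m)%N ->
  (forall k, iter_dom m (u k)) -> convergent u -> convergent (fun k => polyf f P (u k)) ->
  convergent (fun k => polyf f ('X * (P %/ qs_poly)) (u k)).
Proof.
move=> sP m2 Hu [x cu] [y cPu]; set r := P %% qs_poly.
have -> : (fun k => polyf f ('X * (P %/ qs_poly)) (u k)) = (fun k =>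
    f (Rq (polyf f P (u k))) - r`_0 *: f (Rq (u k))
    - r`_1 *: (u k + (2 * a) *: f (Rq (u k)) - b *: Rq (u k))).
  apply: funext => k; rewrite (fRq_polyf sP m2 (Hu k)) ffRq.
  by rewrite [_ + _ + _ - _]addrAC !addrK.
exists (f (Rq y) - r`_0 *: f (Rq x) - r`_1 *: (x + (2 * a) *: f (Rq x) - b *: Rq x)).
apply: cvB; first by apply: cvB; [apply: fRq_cv | apply/cvZ/fRq_cv].
by apply/cvZ/cvB; [apply: cvD => //; apply/cvZ/fRq_cv | apply/cvZ/Rq_cv].
Qed.

Lemma convergent_iter_polyf m (P : {poly R}) u : size P = m.+1 ->
  (forall k, iter_dom m (u k)) -> convergent u -> convergent (fun k => polyf f P (u k)) ->
  forall j, (j <= m)%N -> convergent (fun k => iter j f (u k)).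
Proof.
elim/ltn_ind: m P u => m IH P u sP Hu cu [y cPu].
have lower j : (j < m)%N -> convergent (fun k => iter j f (u k)).
  have [m_lt2 jm|m2] := ltnP m 2; first by have -> : j = 0%N by lia.
  have sP1 : size (P %/ qs_poly) = m.-1.
    by rewrite size_divp ?qs_poly_neq0 // size_qs_poly sP; rewrite -!subn1; lia.
  have sXP1 : size ('X * (P %/ qs_poly)) = m.-1.+1.
    by rewrite -commr_polyX size_mulX ?sP1 // -size_poly_eq0 sP1; rewrite -!subn1; lia.
  move=> jm; apply: (IH m.-1 _ _ _ sXP1) => //; try by rewrite -!subn1; lia.
  - by move=> k; apply: (iter_dom_le (leq_pred m) (Hu k)).
  - exact: (convergent_polyf_Xdivp sP m2 Hu cu (ex_intro _ y cPu)).
move=> j; rewrite leq_eqVlt => /orP[/eqP -> | ]; last exact: lower.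
have [l cl] := choice (fun i : 'I_m => lower i (ltn_ord i)).
have Pm : P`_m != 0.
  by rewrite -[m]/(m.+1.-1) -sP -lead_coefE lead_coef_eq0 -size_poly_eq0 sP.
exists ((P`_m)^-1 *: (y - \sum_(i < m) P`_i *: l i)).
have -> : (fun k => iter m f (u k)) =
    (fun k => (P`_m)^-1 *: (polyf f P (u k) - \sum_(i < m) P`_i *: iter i f (u k))).
  apply: funext => k; rewrite /polyf sP big_ord_recr /= /powf addrC addrK.
  by rewrite scalerA mulVf // scale1r.
by apply/cvZ/cvB => //; apply: cv_sum.
Qed.

Theorem polyf_seq_closed (P : {poly R}) : seq_closed_op cv (polyD D f P) (polyf f P).
Proof.
move=> u x y Du cu cPu.
have [P0|P_neq0] := eqVneq P 0.
  move: cPu; rewrite P0 /polyD size_poly0 polyf0.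
  have -> : polyf f 0 \o u = fun _ => 0 by apply: funext => k; exact: polyf0.
  by move/(cv_unique cv_cst0).
have [m sP] : exists m, size P = m.+1 by exists (size P).-1; rewrite prednK // size_poly_gt0.
have Hu k : iter_dom m (u k) by apply/powD_iter_dom; move: (Du k); rewrite /polyD sP.
have conv := convergent_iter_polyf sP Hu (ex_intro _ x cu) (ex_intro _ y cPu).
have iter_cv j : (j <= m)%N -> iter_dom j x /\ cv (fun k => iter j f (u k)) (iter j f x).
  elim: j => [|j IH] jm; first by split => // i.
  have [Hx cj] := IH (ltnW jm); have [z cz] := conv j.+1 jm.
  have [Dx fx] := cv_closed (fun k => Hu k j jm) cj cz.
  by rewrite iterS fx; split => //; apply: iter_dom_rcons.
split; first by rewrite /polyD sP; apply/powD_iter_dom; case: (iter_cv m (leqnn m)).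
apply: (cv_unique _ cPu); rewrite [polyf f P x]/polyf /powf sP.
have -> : polyf f P \o u = fun k => \sum_(i < m.+1) P`_i *: iter i f (u k).
  by apply: funext => k; rewrite /= /polyf sP.
exact: (cv_sum (fun i : 'I_m.+1 => P`_i) (fun i => (iter_cv i (ltn_ord i)).2)).
Qed.

End SequentialClosedness.
End Resolvent.
End PartialOperator.

Lemma cvg_dist0 (R : realType) (W : normedModType R) (u : nat -> W) x :
  u @ \oo --> x -> (fun k => `|x - u k|) @ \oo --> (0 : R).
Proof.
by move=> cu; have := cvg_norm (cvgB (cvg_cst x) cu); rewrite subrr normr0; apply.
Qed.

Lemma cvg_dist_le (R : realType) (W : normedModType R) (u : nat -> W) x
    (e : nat -> R) (C : R) :
  e @ \oo --> (0 : R) -> (forall k, `|x - u k| <= C * e k) -> u @ \oo --> x.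
Proof.
move=> e0 ue; apply/cvgrPdist_le => eps eps0.
have Ce0 : (fun k => C * e k) @ \oo --> (0 : R).
  by have := cvgZl_tmp (k := C) e0; rewrite scaler0; apply.
near=> k; apply: le_trans (ue k) (le_trans (ler_norm _) _).
by near: k; exact: cvgr0_norm_le Ce0 _ eps0.
Unshelve. all: by end_near.
Qed.

Lemma bounded_additive_cvg (R : realType) (W W' : normedModType R)
    (h : W -> W') (C : R) :
  (forall x y, h (x - y) = h x - h y) -> (forall x, `|h x| <= C * `|x|) ->
  forall (u : nat -> W) x, u @ \oo --> x -> (fun k => h (u k)) @ \oo --> h x.
Proof.
move=> hB hC u x cu; apply: (cvg_dist_le (C := C) (cvg_dist0 cu)) => k.
by rewrite -hB.
Qed.

Lemma cvg_big_sum (R : realType) (W : normedModType R) (I : Type) (r : seq I)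
    (F : I -> nat -> W) (l : I -> W) :
  (forall i, F i @ \oo --> l i) ->
  (fun k => \sum_(i <- r) F i k) @ \oo --> \sum_(i <- r) l i.
Proof.
move=> cF; elim: r => [|i r IH].
  by rewrite big_nil; under eq_fun do rewrite big_nil; exact: cvg_cst.
by rewrite big_cons; under eq_fun do rewrite big_cons; exact: cvgD.
Qed.

Lemma closure_approx (R : realType) (U : normedModType R) (S : set U) p (e : R) :
  closure S p -> 0 < e -> exists2 a, S a & `|p - a| < e.
Proof.
move=> Sp e0; have [a [Sa pa]] := Sp _ (nbhsx_ballx p _ e0).
by exists a => //; move: pa; rewrite -ball_normE.
Qed.

Section ClosedGraph.
Variables (R : realType) (U W : completeNormedModType R) (g : U -> W).
Hypothesis gD : forall x y, g (x + y) = g x + g y.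
Hypothesis gZ : forall (c : R) x, g (c *: x) = c *: g x.
Hypothesis g_closed : forall (u : nat -> U) x y,
  u @ \oo --> x -> (g \o u) @ \oo --> y -> g x = y.

Let g0 : g 0 = 0. Proof. by have := gZ 0 0; rewrite !scale0r. Qed.

Let gB x y : g (x - y) = g x - g y.
Proof. by rewrite gD -[- y]scaleN1r gZ scaleN1r. Qed.

Let level (i : nat) := [set x : U | `|g x| <= i%:R].

Lemma closure_level_ball : exists (i : nat) (x0 : U) (r : R),
  0 < r /\ forall z, `|z| < r -> closure (level i) (x0 + z).
Proof.
have [[i not_dense]|all_dense] := pselect (exists i, ~ dense (~` closure (level i))).
  have [O [[x0 Ox0] OE]] := denseNE not_dense.
  have /nbhs_ballP [r r0 Or] := open_nbhs_nbhs Ox0.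
  exists i, x0, r; split => // z zr; apply: contrapT => Nz.
  have : (O `&` ~` closure (level i)) (x0 + z).
    by split => //; apply: Or; rewrite -ball_normE /= opprD addrA subrr sub0r normrN.
  by rewrite OE.
have open_dense i : open (~` closure (level i)) /\ dense (~` closure (level i)).
  split; first exact/closed_openC/closed_closure.
  by apply: contrapT => Ni; apply: all_dense; exists i.
have [z [_ Nz]] := Baire open_dense (ex_intro _ 0 I) openT.
exfalso; apply: (Nz (Num.truncn `|g z|).+1 I); apply: subset_closure.
exact/ltW/truncnS_gt.
Qed.

Lemma closed_graph_approx : exists2 M : R, 0 <= M &
  forall y, exists x, `|y - x| <= `|y| / 2 /\ `|g x| <= M * `|y|.
Proof.
have [i [x0 [r [r0 level_near]]]] := closure_level_ball.
exists (4 * i%:R / r); first by rewrite divr_ge0 ?mulr_ge0 ?ler0n ?(ltW r0).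
move=> y; have [->|y_neq0] := eqVneq y 0.
  by exists 0; rewrite subr0 normr0 mul0r g0 normr0 mulr0.
set ny := `|y|; have ny0 : 0 < ny by rewrite normr_gt0.
(* approximate x0 and x0 + t y by points a2, a1 of the level set, with t y in the ball *)
set t := r / (2 * ny); have t0 : 0 < t by rewrite divr_gt0 ?mulr_gt0.
have tinv : t^-1 = 2 * ny / r by rewrite invf_div mulrC.
have c0 : 0 <= 2 * ny / r by rewrite divr_ge0 ?mulr_ge0 ?(ltW r0) ?(ltW ny0).
have tny : t * ny = r / 2 by rewrite /t; field; rewrite gt_eqF.
have tyr : `|t *: y| < r by rewrite normrZ gtr0_norm // tny; lra.
have r8 : 0 < r / 8 by lra.
have [a1 a1_in a1_near] := closure_approx (level_near _ tyr) r8.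
have [a2 a2_in a2_near] : exists2 a2, level i a2 & `|x0 - a2| < r / 8.
  by apply: closure_approx r8; rewrite -[x0]addr0; apply: level_near; rewrite normr0.
exists (t^-1 *: (a1 - a2)); split.
  have -> : y - t^-1 *: (a1 - a2) = t^-1 *: ((x0 + t *: y - a1) - (x0 - a2)).
    have -> : x0 + t *: y - a1 - (x0 - a2) = t *: y - (a1 - a2).
      by rewrite opprB addrC !addrA subrK [_ + t *: y]addrC -addrA opprB.
    by rewrite !scalerBr scalerA mulVf ?gt_eqF // scale1r.
  rewrite normrZ gtr0_norm ?invr_gt0 // tinv.
  have -> : ny / 2 = 2 * ny / r * (r / 4) by field; rewrite gt_eqF.
  by apply: (ler_wpM2l c0); apply: le_trans (ler_normB _ _) _; lra.
rewrite gZ gB normrZ gtr0_norm ?invr_gt0 // tinv.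
have -> : 4 * i%:R / r * ny = 2 * ny / r * (i%:R + i%:R) by field; rewrite gt_eqF.
by apply: (ler_wpM2l c0); apply: le_trans (ler_normB _ _) (lerD _ _).
Qed.

Section ApproximationSeries.
Variables (M : R) (h : U -> U) (y : U).
Hypothesis M0 : 0 <= M.
Hypothesis h_approx : forall v, `|v - h v| <= `|v| / 2 /\ `|g (h v)| <= M * `|v|.

Let q : R := 2^-1.
Let residual n := iter n (fun v => v - h v) y.

Lemma residual_le n : `|residual n| <= q ^+ n * `|y|.
Proof.
elim: n => [|n IH]; first by rewrite expr0 mul1r.
apply: le_trans (h_approx _).1 _.
by rewrite exprS -mulrA mulrC; apply: ler_wpM2l; rewrite ?invr_ge0.
Qed.

Lemma series_residual n : series (h \o residual) n = y - residual n.
Proof.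
elim: n => [|n IH]; first by rewrite seriesEord /= big_ord0 subrr.
by rewrite seriesSr IH /= opprB addrA [y - _ + _]addrAC.
Qed.

Lemma approx_series_cvg : series (h \o residual) @ \oo --> y.
Proof.
have q1 : `|q| < 1 by rewrite ger0_norm ?invr_ge0 // invf_lt1 // ltr1n.
have residual0 : residual @ \oo --> 0.
  apply/cvgr0Pnorm_le => e e0; near=> n; apply: le_trans (residual_le n) _.
  rewrite mulrC; apply: le_trans (ler_norm _) _.
  by near: n; exact: cvgr0_norm_le (cvg_geometric `|y| q1) _ e0.
have -> : series (h \o residual) = fun n => y - residual n.
  by apply: funext => n; exact: series_residual.
by rewrite -[X in _ --> X]subr0; apply: cvgB => //; exact: cvg_cst.
Unshelve. all: by end_near.
Qed.

Lemma g_approx_series_cvg :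
  exists2 z, series (g \o h \o residual) @ \oo --> z & `|z| <= 2 * M * `|y|.
Proof.
have q1 : `|q| < 1 by rewrite ger0_norm ?invr_ge0 // invf_lt1 // ltr1n.
have gh_le n : `|(g \o h \o residual) n| <= geometric (M * `|y|) q n.
  apply: le_trans (h_approx _).2 _; rewrite /= -mulrA [`|y| * _]mulrC.
  by apply: ler_wpM2l => //; exact: residual_le.
have /cvg_ex[z cz] : cvgn (series (g \o h \o residual)).
  apply: normed_cvg; apply: (series_le_cvg (v_ := geometric (M * `|y|) q)).
  - by move=> n; apply: normr_ge0.
  - by move=> n; apply: geometric_ge0; rewrite ?mulr_ge0 ?invr_ge0.
  - exact: gh_le.
  - exact: is_cvg_geometric_series.
exists z => //.
have partial_le n : `|series (g \o h \o residual) n| <= 2 * M * `|y|.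
  apply: le_trans (_ : 2 * M * `|y| * (1 - q ^+ n) <= _); last first.
    by rewrite ler_piMr ?mulr_ge0 // lerBlDr lerDl exprn_ge0 ?invr_ge0.
  elim: n => [|n IH]; first by rewrite seriesEord /= big_ord0 normr0 expr0 subrr mulr0.
  rewrite seriesSr; apply: le_trans (ler_normD _ _) (le_trans (lerD IH (gh_le n)) _).
  by rewrite /= exprS /q; lra.
have partial_near :
  \forall n \near \oo, `|series (g \o h \o residual) n| <= 2 * M * `|y|.
  exact: nearW.
have closed_ball : closed [set x : R | x <= 2 * M * `|y|] by exact: closed_le.
exact: (@closed_cvg _ _ \oo eventually_filter _ _ closed_ball partial_near _
  (cvg_norm cz)).
Qed.

End ApproximationSeries.

Theorem closed_graph_bounded : exists M : R, forall x, `|g x| <= M * `|x|.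
Proof.
have [M M0 approx] := closed_graph_approx; have [h h_approx] := choice approx.
exists (2 * M) => y; have [z cz z_le] := g_approx_series_cvg y M0 h_approx.
suff -> : g y = z by [].
apply: g_closed (approx_series_cvg h_approx) _.
set r := fun n => _; suff -> : g \o series (h \o r) = series (g \o h \o r) by [].
apply: funext => n; elim: n => [|n IH] /=; first by rewrite !seriesEord /= !big_ord0 g0.
by rewrite !seriesSr gD -IH.
Qed.

End ClosedGraph.

Lemma qK_real_linear (R : realType) (V : completeNormedModType R)
    (lm : quat R -> V -> V) (rm : V -> quat R -> V) (D : set V) (T : V -> V) :
  two_sided_qBanach lm rm -> qK rm D T -> real_linear_op D T.
Proof.
move=> HB [D0 [DD [Drm [TD [Trm _]]]]].
have rm_real (r : R) v : rm v (qreal r) = r *: v.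
  by case: HB => _ [_ [_ [_ [_ [_ [_ [rmr _]]]]]]]; exact: rmr.
by split => // c x Dx; rewrite -!rm_real ?Trm //; exact: Drm.
Qed.

Lemma quaternion_polyf_closed (R : realType) (V : completeNormedModType R)
    (lm : quat R -> V -> V) (rm : V -> quat R -> V) (D : set V) (T : V -> V) :
  two_sided_qBanach lm rm -> qK rm D T -> (exists s : quat R, q_in_S_resolvent D T s) ->
  forall P : {poly R}, seq_closed_op (@ncv R V) (polyD D T P) (polyf T P).
Proof.
move=> HB HK [s [Rq [C [Rq_inv [RqK Rq_le]]]]].
have lin := qK_real_linear HB HK; have [_ [_ [_ [_ [_ T_closed]]]]] := HK.
have Rq_dom v := (Rq_inv v).1; have QsfK v := (Rq_inv v).2.
have DRq v : D (Rq v) := Rq_in_dom Rq_dom v.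
have Rq_cv := bounded_additive_cvg (RqB lin Rq_dom QsfK RqK) Rq_le.
have TRqD x y : T (Rq (x + y)) = T (Rq x) + T (Rq y).
  by rewrite (RqD lin Rq_dom QsfK RqK) (rlin_fD lin) //; exact: DRq.
have TRqZ (c : R) x : T (Rq (c *: x)) = c *: T (Rq x).
  by rewrite (RqZ lin Rq_dom QsfK RqK) (rlin_fZ lin) //; exact: DRq.
have TRq_closed (u : nat -> V) x y :
    u @ \oo --> x -> (T \o Rq \o u) @ \oo --> y -> T (Rq x) = y.
  by move=> cu cTu; case: (T_closed _ _ _ (fun k => DRq (u k)) (Rq_cv _ _ cu) cTu).
have [M TRq_le] := closed_graph_bounded TRqD TRqZ TRq_closed.
have TRqB x y : T (Rq (x - y)) = T (Rq x) - T (Rq y).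
  by rewrite (RqB lin Rq_dom QsfK RqK) (rlin_fB lin) //; exact: DRq.
apply: (polyf_seq_closed lin Rq_dom QsfK RqK) => //.
- by move=> *; apply: cvgD.
- by move=> *; apply: cvgZl_tmp.
- by move=> u x y; apply: cvg_unique.
- exact: cvg_cst.
- exact: bounded_additive_cvg TRqB TRq_le.
Qed.

Section Clifford.
Variables (R : realType) (n : nat) (VR : completeNormedModType R).
Local Notation cV := {ffun {set 'I_n} -> VR}.
Variables (DT : 'I_n.+1 -> set VR) (fT : 'I_n.+1 -> VR -> VR).
Hypothesis HK : cK DT fT.

Lemma cK_linear j : real_linear_op (DT j) (fT j).
Proof. by case: (HK j). Qed.

Lemma paraF_linear : real_linear_op (paraD DT) (paraF fT).
Proof.
split.
- by move=> A j; rewrite ffunE; apply: rlin_dom0 (cK_linear j).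
- move=> x y Dx Dy A j; rewrite ffunE.
  by apply: (rlin_domD (cK_linear j)); [apply: Dx | apply: Dy].
- by move=> c x Dx A j; rewrite ffunE; apply: (rlin_domZ (cK_linear j)); apply: Dx.
- move=> x y Dx Dy; apply/ffunP => B.
  have fD j C : fT j (x C + y C) = fT j (x C) + fT j (y C).
    by apply: (rlin_fD (cK_linear j)); [apply: Dx | apply: Dy].
  rewrite !ffunE fD; under eq_bigr do rewrite ffunE fD scalerDr.
  by rewrite big_split addrACA.
- move=> c x Dx; apply/ffunP => B.
  have fZ j C : fT j (c *: x C) = c *: fT j (x C).
    by apply: (rlin_fZ (cK_linear j)); apply: Dx.
  rewrite !ffunE fZ scalerDr scaler_sumr; congr (_ + _); apply: eq_bigr => i _.
  by rewrite ffunE fZ !scalerA mulrC.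
Qed.

Local Notation ccv := (@ccv R n VR).

Lemma ccvD (u w : nat -> cV) x y :
  ccv u x -> ccv w y -> ccv (fun k => u k + w k) (x + y).
Proof. by move=> cu cw A; rewrite ffunE; under eq_fun do rewrite ffunE; exact: cvgD. Qed.

Lemma ccvZ (u : nat -> cV) x (c : R) : ccv u x -> ccv (fun k => c *: u k) (c *: x).
Proof.
by move=> cu A; rewrite ffunE; under eq_fun do rewrite ffunE; exact: cvgZl_tmp.
Qed.

Lemma ccv_unique (u : nat -> cV) x y : ccv u x -> ccv u y -> x = y.
Proof. by move=> cx cy; apply/ffunP => A; exact: cvg_unique (cx A) (cy A). Qed.

Lemma normr_le_cnorm (v : cV) A : `|v A| <= cnorm v.
Proof. by rewrite /cnorm (bigD1 A) //= lerDl sumr_ge0. Qed.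

Lemma ccv_cnorm (u : nat -> cV) x :
  ccv u x -> (fun k => cnorm (x - u k)) @ \oo --> (0 : R).
Proof.
move=> cu; have : (fun k => \sum_(A : {set 'I_n}) `|x A - u k A|) @ \oo -->
    \sum_(A : {set 'I_n}) (0 : R).
  by apply: cvg_big_sum => A; exact: cvg_dist0.
rewrite big1 // => cvg_sum0; rewrite /cnorm.
by under eq_fun do under eq_bigr do rewrite !ffunE.
Qed.

(* the element x e_C of V *)
Definition cdelta (C : {set 'I_n}) (x : VR) : cV :=
  [ffun B => if B == C then x else 0].

Lemma cdeltaD C x y : cdelta C (x + y) = cdelta C x + cdelta C y.
Proof. by apply/ffunP => B; rewrite !ffunE; case: (B == C); rewrite ?addr0. Qed.

Lemma cdeltaZ C (c : R) x : cdelta C (c *: x) = c *: cdelta C x.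
Proof. by apply/ffunP => B; rewrite !ffunE; case: (B == C); rewrite ?scaler0. Qed.

Lemma ffun_cdelta_sum (v : cV) : v = \sum_(C : {set 'I_n}) cdelta C (v C).
Proof.
apply/ffunP => A; rewrite sum_ffunE (bigD1 A) //= ffunE eqxx big1 ?addr0 // => C CA.
by rewrite ffunE; case: eqP => // A_eq; move: CA; rewrite A_eq eqxx.
Qed.

Section CliffordResolvent.
Variables (Rq : cV -> cV) (a b C : R).
Hypothesis Rq_dom : forall v, QsD (paraD DT) (paraF fT) (Rq v).
Hypothesis QsfK : forall v, Qsf (paraF fT) a b (Rq v) = v.
Hypothesis RqK :
  forall v, QsD (paraD DT) (paraF fT) v -> Rq (Qsf (paraF fT) a b v) = v.
Hypothesis Rq_le : forall v, cnorm (Rq v) <= C * cnorm v.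

Let RqD := RqD paraF_linear Rq_dom QsfK RqK.
Let RqZ := RqZ paraF_linear Rq_dom QsfK RqK.
Let Rq_in_dom := Rq_in_dom Rq_dom.

Lemma Rq_ccv (u : nat -> cV) x : ccv u x -> ccv (fun k => Rq (u k)) (Rq x).
Proof.
move=> cu A; apply: (cvg_dist_le (C := C) (ccv_cnorm cu)) => k.
have := normr_le_cnorm (Rq x - Rq (u k)) A; rewrite !ffunE => /le_trans; apply.
by rewrite -(RqB paraF_linear Rq_dom QsfK RqK).
Qed.

(* z |-> (T_j R (z e_E))_A is closed and everywhere defined on V_R, hence bounded. *)
Lemma fT_Rq_cdelta_cvg j A E (w : nat -> VR) y : w @ \oo --> y ->
  (fun k => fT j (Rq (cdelta E (w k)) A)) @ \oo --> fT j (Rq (cdelta E y) A).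
Proof.
pose g z := fT j (Rq (cdelta E z) A).
have gD z z' : g (z + z') = g z + g z'.
  by rewrite /g cdeltaD RqD ffunE (rlin_fD (cK_linear j)) //; apply: Rq_in_dom.
have gZ (c : R) z : g (c *: z) = c *: g z.
  by rewrite /g cdeltaZ RqZ ffunE (rlin_fZ (cK_linear j)) //; apply: Rq_in_dom.
have g_closed (v : nat -> VR) z z' : v @ \oo --> z -> (g \o v) @ \oo --> z' -> g z = z'.
  move=> cv cgv; have cdv : ccv (fun k => cdelta E (v k)) (cdelta E z).
    move=> B; rewrite ffunE; under eq_fun do rewrite ffunE.
    by case: (B == E) => //; exact: cvg_cst.
  by case: (proj2 (HK j) _ _ _ (fun k => Rq_in_dom _ _ _) (@Rq_ccv _ _ cdv A) cgv).
have [M g_le] := closed_graph_bounded gD gZ g_closed.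
have gB z z' : g (z - z') = g z - g z' by rewrite gD -[- z']scaleN1r gZ scaleN1r.
exact: (bounded_additive_cvg gB g_le).
Qed.

Lemma fT_Rq_cvg j A (u : nat -> cV) x : ccv u x ->
  (fun k => fT j (Rq (u k) A)) @ \oo --> fT j (Rq x A).
Proof.
have Rq0 : Rq 0 = 0 by have := RqZ 0 0; rewrite !scale0r.
have split_cdelta (v : cV) :
    fT j (Rq v A) = \sum_(E : {set 'I_n}) fT j (Rq (cdelta E (v E)) A).
  rewrite {1}(ffun_cdelta_sum v) (big_morph Rq RqD Rq0) sum_ffunE.
  have [_ ->] // := rlin_sum (cK_linear j) (index_enum {set 'I_n})
    (fun E => Rq_in_dom (cdelta E (v E)) A j).
move=> cu; rewrite split_cdelta; under eq_fun do rewrite split_cdelta.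
by apply: cvg_big_sum => E; apply: fT_Rq_cdelta_cvg.
Qed.

Lemma paraF_Rq_ccv (u : nat -> cV) x : ccv u x ->
  ccv (fun k => paraF fT (Rq (u k))) (paraF fT (Rq x)).
Proof.
move=> cu B; rewrite ffunE; under eq_fun do rewrite ffunE.
apply: cvgD; first exact: fT_Rq_cvg.
by apply: cvg_big_sum => i; apply: cvgZl_tmp; exact: fT_Rq_cvg.
Qed.

End CliffordResolvent.

Lemma clifford_polyf_closed :
  (exists (s0 : R) (s : 'I_n -> R), c_in_S_resolvent DT fT s0 s) ->
  forall P : {poly R},
    seq_closed_op ccv (polyD (paraD DT) (paraF fT) P) (polyf (paraF fT) P).
Proof.
move=> [s0 [s [Rq [C [Rq_inv [RqK Rq_le]]]]]].
have Rq_dom v := (Rq_inv v).1; have QsfK v := (Rq_inv v).2.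
apply: (polyf_seq_closed paraF_linear Rq_dom QsfK RqK).
- exact: ccvD.
- exact: ccvZ.
- exact: ccv_unique.
- by move=> A; rewrite ffunE; exact: cvg_cst.
- exact: Rq_ccv Rq_dom QsfK RqK Rq_le.
- exact: paraF_Rq_ccv Rq_dom QsfK RqK Rq_le.
Qed.

End Clifford.

Theorem mainTheorem11 :
  (* setting (a): quaternionic *)
  (forall (R : realType) (V : completeNormedModType R)
          (lm : quat R -> V -> V) (rm : V -> quat R -> V)
          (D : set V) (T : V -> V),
      two_sided_qBanach lm rm ->
      qK rm D T ->
      (exists s : quat R, q_in_S_resolvent D T s) ->
      forall P : {poly R}, seq_closed_op (@ncv R V) (polyD D T P) (polyf T P))
  /\
  (* setting (b): Clifford *)
  (forall (R : realType) (n : nat) (VR : completeNormedModType R)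
          (DT : 'I_n.+1 -> set VR) (fT : 'I_n.+1 -> VR -> VR),
      cK DT fT ->
      (exists (s0 : R) (s : 'I_n -> R), c_in_S_resolvent DT fT s0 s) ->
      forall P : {poly R},
        seq_closed_op (@ccv R n VR) (polyD (paraD DT) (paraF fT) P)
                                    (polyf (paraF fT) P)).
Proof.
split; first exact: quaternion_polyf_closed.
by move=> R n VR DT fT HK; exact: clifford_polyf_closed.
Qed.
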